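(* In the epoch setting described in the context, assume moreover that $\mathcal{G}$ is $\Delta$-temporally connected. If $(s_1,\dots,s_\rho)\in S^{(1)}\times\cdots\times S^{(\rho)}$ is a tuple that is $I$-covering for every $I\in\mathcal{I}$, then $\mathcal{G}$ can be explored from any vertex during the $\rho$ epochs, i.e., for every vertex $v$ there is a temporal walk starting at $v$, using only time steps within the $\rho$ epochs, that visits all vertices.
   Context: A temporal walk in $\mathcal{G}=\langle G_1,\dots,G_L\rangle$ is a sequence $(v_0,e_1,v_1,\dots,e_\ell,v_\ell)$ with strictly increasing time steps $t_1<\dots<t_\ell$ such that $e_j=\{v_{j-1},v_j\}\in E(G_{t_j})$. $\mathcal{G}$ is temporally connected if every ordered pair of vertices is joined by a temporal walk, and $\Delta$-temporally connected if $\langle G_t,\dots,G_{t+\Delta-1}\rangle$ is temporally connected for every $t\in[L-\Delta+1]$. Let $n\ge 2$ and $k\ge1$, $\Delta$ be natural numbers, $\mathcal{G}$ a temporal graph on an $n$-element vertex set $V$, and $T$ a spanning tree of its underlying graph (the union of the snapshots). A snapshot is $k$-edge-deficient w.r.t. $T$ if it contains all but at most $k$ edges of $T$. Let $N=2(n-1)$, fix a DFS tour of $T$ from a root $r$ traversing each edge twice, with cyclic vertex sequence $(v_1,\dots,v_{N+1})$, $v_{N+1}=v_1=r$, tour edges $e_q=\{v_q,v_{q+1}\}$; state $q$ corresponds to vertex $v_q$. Circular intervals: $[\![i,j]\!]=\{i,\dots,j\}$ if $i\le j$, $\{i,\dots,N,1,\dots,j\}$ if $i>j$; $[\![i,j[\![=[\![i,j]\!]\setminus\{j\}$.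 Roundabout process on a sequence $H_1,\dots,H_t$ of graphs: agents $a_1,\dots,a_N$, $s_i(0)=i$; at step $\tau$, if $s_i(\tau-1)=q$ then $s_i(\tau)=(q\bmod N)+1$ if $e_q\in E(H_\tau)$, else $q$; visited states $D_i(\tau)=[\![i,s_i(\tau)]\!]$, $D_i(0)=\{i\}$; active sets $A(0)=$ all agents, and $A(\tau)$ is obtained from $A(\tau-1)$ by repeatedly removing an arbitrary agent $a_i$ with $D_i(\tau)\subseteq\bigcup D_j(\tau)$ over the other current agents, until none remains. Let $t=\lfloor N/(2k)\rfloor$ and $\rho=\lceil 18k\ln(6k)\rceil$. Assume an initial part of $[L]$ is partitioned into $\rho$ consecutive intervals (epochs), each containing at least $\Delta+t$ snapshots that are $k$-edge-deficient w.r.t. $T$; each epoch's first $\Delta$ time steps form its repositioning part, and the rest (containing at least $t$ such snapshots) is its roundabout part. In epoch $i$, run the roundabout process for $t$ steps on the first $t$ $k$-edge-deficient snapshots of its roundabout part, let $A^{(i)}$ be the active agents after step $t$ and $S^{(i)}$ their initial states. Let $\bigcup_{i\in[\rho]}S^{(i)}=\{m_1<\dots<m_d\}$, $I_j=[\![m_j,m_{j+1}[\![$ for $j\in[d-1]$, $I_d=[\![m_d,m_1[\![$, and $\mathcal{I}=\{I_1,\dots,I_d\}$. For $I\in\mathcal{I}$, a tuple $(s_1,\dots,s_\rho)\in S^{(1)}\times\cdots\times S^{(\rho)}$ is $I$-covering unless for every $i\in[\rho]$ the agent of $A^{(i)}$ with initial state $s_i$ fails to visit all states of $I$ in the roundabout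 process of epoch $i$. *)

From Stdlib Require Import Reals.
From mathcomp Require Import all_boot.
Set Implicit Arguments. Unset Strict Implicit. Unset Printing Implicit Defensive.

Definition Ntour (n : nat) : nat := (n.-1).*2.
Definition tsteps (n k : nat) : nat := Ntour n %/ (2 * k).
(* rho = ceil(18 k ln(6k)) : rho is the (unique) natural number with
   rho - 1 < 18 k ln(6k) <= rho *)
Definition is_rho (k rho : nat) : Prop :=
  Rlt (Rminus (INR rho) 1) (Rmult (Rmult 18 (INR k)) (ln (Rmult 6 (INR k)))) /\
  Rle (Rmult (Rmult 18 (INR k)) (ln (Rmult 6 (INR k)))) (INR rho).

Definition cint (N i j q : nat) : bool :=
  if i <= j then (i <= q) && (q <= j)
  else ((i <= q) && (q <= N)) || ((1 <= q) && (q <= j)).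
Definition cint_open (N i j q : nat) : bool := cint N i j q && (q != j).

Definition simple_snapshots {n : nat} (G : nat -> rel 'I_n) (L : nat) : Prop :=
  forall t, 1 <= t <= L -> (forall u v, G t u v = G t v u) /\ (forall u, ~~ G t u u).

(* A temporal walk from v0: the list of steps (t_j, v_j), j = 1..l, with
   strictly increasing times and {v_{j-1}, v_j} an edge of G_{t_j}. *)
Definition temporal_walk {n : nat} (G : nat -> rel 'I_n) (v0 : 'I_n)
    (w : seq (nat * 'I_n)) : Prop :=
  sorted ltn [seq p.1 | p <- w] /\
  path (fun x y : nat * 'I_n => G y.1 x.2 y.2) (0, v0) w.

Definition walk_within {n : nat} (a b : nat) (w : seq (nat * 'I_n)) : bool :=
  all (fun p => (a <= p.1) && (p.1 <= b)) w.

Definition temporally_connected_on {n : nat} (G : nat -> rel 'I_n) (a b : nat) : Prop :=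
  forall u v : 'I_n, exists w, temporal_walk G u w /\ walk_within a b w /\
                         last u [seq p.2 | p <- w] = v.

Definition delta_temporally_connected {n : nat} (G : nat -> rel 'I_n) (L Delta : nat) : Prop :=
  forall t, 1 <= t -> t + Delta - 1 <= L -> temporally_connected_on G t (t + Delta - 1).

Definition is_tree {n : nat} (T : rel 'I_n) : Prop :=
  (forall u v, T u v = T v u) /\ (forall u, ~~ T u u) /\
  (forall u v, connect T u v) /\
  #|[set e : 'I_n * 'I_n | (e.1 < e.2) && T e.1 e.2]| = n.-1.

Definition spanning_tree_of_underlying {n : nat} (G : nat -> rel 'I_n) (L : nat)
    (T : rel 'I_n) : Prop :=
  is_tree T /\ forall u v, T u v -> exists t, 1 <= t <= L /\ G t u v.

Definition deficient {n : nat} (G : nat -> rel 'I_n) (T : rel 'I_n) (k t : nat) : bool :=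
  #|[set e : 'I_n * 'I_n | [&& e.1 < e.2, T e.1 e.2 & ~~ G t e.1 e.2]]| <= k.

Definition dfs_tour {n : nat} (T : rel 'I_n) (tour : nat -> 'I_n) (r : 'I_n) : Prop :=
  let N := Ntour n in
  tour 1 = r /\ tour N.+1 = r /\
  (forall q, 1 <= q <= N -> T (tour q) (tour q.+1)) /\
  (forall u v : 'I_n, u < v -> T u v ->
     count (fun q => ((tour q == u) && (tour q.+1 == v)) ||
                     ((tour q == v) && (tour q.+1 == u))) (iota 1 N) = 2).

Fixpoint rstate {n : nat} (N : nat) (tour : nat -> 'I_n) (H : nat -> rel 'I_n)
    (i tau : nat) : nat :=
  match tau with
  | 0 => i
  | tau'.+1 =>
      let q := rstate N tour H i tau' in
      if H tau'.+1 (tour q) (tour q.+1) then q %% N + 1 else q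
  end.

Definition visited {n : nat} (N : nat) (tour : nat -> 'I_n) (H : nat -> rel 'I_n)
    (i tau q : nat) : bool :=
  cint N i (rstate N tour H i tau) q.

Definition removable (D : nat -> nat -> bool) (A : nat -> bool) (a : nat) : Prop :=
  A a /\ forall q, D a q -> exists j, [&& A j, j != a & D j q].

Fixpoint valid_removals (D : nat -> nat -> bool) (A : nat -> bool) (rs : seq nat) : Prop :=
  match rs with
  | [::] => True
  | a :: rs' => removable D A a /\ valid_removals D (fun j => A j && (j != a)) rs'
  end.

Definition prune_result (D : nat -> nat -> bool) (A A' : nat -> bool) : Prop :=
  exists rs, valid_removals D A rs /\ (forall j, A' j = A j && (j \notin rs)) /\
             forall a, ~ removable D A' a.

Definition active_run {n : nat} (N : nat) (tour : nat -> 'I_n) (H : nat -> rel 'I_n)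
    (tt : nat) (act : nat -> nat -> bool) : Prop :=
  (forall j, act 0 j = (1 <= j <= N)) /\
  forall tau, 1 <= tau <= tt ->
    prune_result (fun i q => visited N tour H i tau q) (act tau.-1) (act tau).

(* epoch i (i = 1..rho) is the interval of time steps [b (i-1) + 1, b i];
   its repositioning part is [b(i-1)+1, b(i-1)+Delta], its roundabout part the rest *)
Definition roundabout_times {n : nat} (G : nat -> rel 'I_n) (T : rel 'I_n)
    (k Delta : nat) (b : nat -> nat) (i : nat) : seq nat :=
  [seq u <- iota (b i.-1 + Delta).+1 (b i - (b i.-1 + Delta)) | deficient G T k u].

Definition epochH {n : nat} (G : nat -> rel 'I_n) (T : rel 'I_n)
    (k Delta : nat) (b : nat -> nat) (i : nat) : nat -> rel 'I_n :=
  fun tau => G (nth 0 (roundabout_times G T k Delta b i) tau.-1).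

(* sorted list m_1 < ... < m_d of the union of the S^(i) *)
Definition union_starts (N rho tt : nat) (act : nat -> nat -> nat -> bool) : seq nat :=
  [seq q <- iota 1 N | has (fun i => act i tt q) (iota 1 rho)].

Definition interval_I (N : nat) (ms : seq nat) (j : nat) : nat -> bool :=
  cint_open N (nth 0 ms j) (nth 0 ms (j.+1 %% size ms)).

From Stdlib Require Import Reals Lra.
From mathcomp Require Import all_boot zify.
Set Implicit Arguments. Unset Strict Implicit. Unset Printing Implicit Defensive.

(* In epoch i, Delta-temporal connectivity of the repositioning part lets the
   walk move from wherever it is to the tour vertex of state s_i; during the
   roundabout part it then follows the agent started at s_i along the DFS tour,
   meeting the tour vertex of every state that agent visits.  Concatenating the
   rho epochs gives one temporal walk.  Every state lies in some interval I of
   the family and the tuple is I-covering, so every state is visited; as every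
   vertex occurs on the tour, every vertex is met. *)

Lemma is_rho_gt0 k rho : 1 <= k -> is_rho k rho -> 0 < rho.
Proof.
move=> k_ge1 [_]; case: rho => [|//] /= bound; exfalso.
have k_ge1R : Rle 1 (INR k) by apply: (le_INR 1); apply/leP.
have : Rlt 0 (ln (Rmult 6 (INR k))) by rewrite -ln_1; apply: ln_increasing; lra.
nra.
Qed.

Lemma succ_stateE N s : s <= N -> s %% N + 1 = if s == N then 1 else s.+1.
Proof.
case: eqP => [->|/eqP s_neqN s_leN]; first by rewrite modnn.
by rewrite modn_small ?addn1 // ltn_neqAle s_neqN.
Qed.

Definition cdist (N i s : nat) : nat := if i <= s then s - i else s + N - i.

Lemma cdist_succ N i s : 1 <= i <= N -> 1 <= s <= N ->
  1 <= s %% N + 1 <= N /\ cdist N i (s %% N + 1) <= (cdist N i s).+1.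
Proof.
move=> i_range s_range; rewrite succ_stateE ?(proj2 (andP s_range)) // /cdist.
by case: eqP; do 2 case: ifP; lia.
Qed.

Lemma cint_succ_inv N i s q : 1 <= i <= N -> 1 <= s <= N ->
  cint N i (s %% N + 1) q -> cint N i s q \/ q = s %% N + 1.
Proof.
move=> i_range s_range; rewrite succ_stateE ?(proj2 (andP s_range)) // /cint.
by case: eqP; do 2 case: ifP; lia.
Qed.

Lemma cint_succ N i s q : 1 <= i <= N -> 1 <= s <= N -> cdist N i s < N.-1 ->
  cint N i s q -> cint N i (s %% N + 1) q.
Proof.
move=> i_range s_range; rewrite succ_stateE ?(proj2 (andP s_range)) // /cint /cdist.
by case: eqP; repeat case: ifP; lia.
Qed.

Lemma rstate_range n N (tour : nat -> 'I_n) H j tau : 1 <= j <= N ->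
  1 <= rstate N tour H j tau <= N /\ cdist N j (rstate N tour H j tau) <= tau.
Proof.
move=> j_range; elim: tau => [|tau [s_range s_dist]] /=.
  by rewrite /cdist leqnn subnn.
case: ifP => _; last by split=> //; apply: leqW.
by have [? d_succ] := cdist_succ j_range s_range; split=> //; apply: leq_trans d_succ _.
Qed.

Lemma visited_succ n N (tour : nat -> 'I_n) H j tau q : 1 <= j <= N -> tau < N.-1 ->
  visited N tour H j tau q -> visited N tour H j tau.+1 q.
Proof.
move=> j_range tau_lt; have [s_range s_dist] := rstate_range tour H tau j_range.
rewrite /visited /=; case: ifP => // _; apply: cint_succ => //.
exact: leq_ltn_trans tau_lt.
Qed.

Section Pruning.
Variables (D : nat -> nat -> bool) (Q : nat -> Prop).

Lemma valid_removals_cover A rs : valid_removals D A rs ->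
  (forall q, Q q -> exists2 j, A j & D j q) ->
  forall q, Q q -> exists2 j, A j && (j \notin rs) & D j q.
Proof.
elim: rs A => [|a rs IH] A /=; first by move=> _ cover q /cover [j Aj Djq]; exists j; rewrite ?Aj.
move=> [[_ a_covered] removals] cover.
have cover' q : Q q -> exists2 j, A j && (j != a) & D j q.
  move=> /cover [j Aj Djq]; case: (eqVneq j a) => [j_a|j_a]; last by exists j; rewrite ?Aj.
  by subst j; have [j' /and3P [Aj' j'_a Dj'q]] := a_covered q Djq; exists j'; rewrite ?Aj'.
move=> q /(IH _ removals cover') [j Aj Djq]; exists j => //.
by rewrite in_cons negb_or andbA.
Qed.

Lemma prune_result_cover A A' : prune_result D A A' ->
  (forall q, Q q -> exists2 j, A j & D j q) -> forall q, Q q -> exists2 j, A' j & D j q.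
Proof.
move=> [rs [removals [A'E _]]] cover q /(valid_removals_cover removals cover) [j Aj Djq].
by exists j; rewrite ?A'E.
Qed.

End Pruning.

Lemma prune_result_sub D A A' j : prune_result D A A' -> A' j -> A j.
Proof. by move=> [rs [_ [-> _]]] /andP []. Qed.

Section ActiveRun.
Variables (n N : nat) (tour : nat -> 'I_n) (H : nat -> rel 'I_n) (tt : nat).
Variable act : nat -> nat -> bool.
Hypothesis run : active_run N tour H tt act.

Lemma active_run_range tau j : tau <= tt -> act tau j -> 1 <= j <= N.
Proof.
case: run => [act0 prune]; elim: tau j => [|tau IH] j tau_le; first by rewrite act0.
move=> act_j; apply: IH (ltnW tau_le) _.
by apply: prune_result_sub act_j; apply: (prune tau.+1); rewrite ltn0Sn.
Qed.

(* While [tt < N] no visited interval wraps around, so the intervals only grow,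
   and pruning only drops agents whose states are visited by the others. *)
Lemma active_run_cover tau q : tt < N -> tau <= tt -> 1 <= q <= N ->
  exists2 j, act tau j & visited N tour H j tau q.
Proof.
move=> tt_lt; case: (run) => [act0 prune].
elim: tau q => [|tau IH] q tau_le q_range.
  by exists q; rewrite ?act0 // /visited /cint /= leqnn.
have step_le : 0 < tau.+1 <= tt by rewrite ltn0Sn.
apply: (prune_result_cover (Q := fun q => 1 <= q <= N) (prune _ step_le)) => // q' q'_range.
have [j act_j vis_j] := IH q' (ltnW tau_le) q'_range.
exists j => //; apply: visited_succ vis_j; last lia.
exact: (active_run_range (ltnW tau_le) act_j).
Qed.

End ActiveRun.

Definition walk_end {n : nat} (v : 'I_n) (w : seq (nat * 'I_n)) : 'I_n :=
  last v [seq p.2 | p <- w].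

Definition walk_vertices {n : nat} (v : 'I_n) (w : seq (nat * 'I_n)) : seq 'I_n :=
  v :: [seq p.2 | p <- w].

Section Walks.
Variables (n : nat) (G : nat -> rel 'I_n).
Implicit Types (v u : 'I_n) (w : seq (nat * 'I_n)).

Lemma walk_end_cat v w1 w2 : walk_end v (w1 ++ w2) = walk_end (walk_end v w1) w2.
Proof. by rewrite /walk_end map_cat last_cat. Qed.

Lemma mem_walk_vertices_cat v w1 w2 u :
  (u \in walk_vertices v (w1 ++ w2)) =
  (u \in walk_vertices v w1) || (u \in walk_vertices (walk_end v w1) w2).
Proof.
rewrite /walk_vertices /walk_end map_cat -cat_cons mem_cat [u \in last _ _ :: _]in_cons.
by case: (eqVneq u (last v _)) => [->|_]; rewrite ?mem_last.
Qed.

Lemma temporal_walk_cat v w1 w2 :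
  temporal_walk G v w1 -> temporal_walk G (walk_end v w1) w2 ->
  (forall p1 p2, p1 \in w1 -> p2 \in w2 -> p1.1 < p2.1) ->
  temporal_walk G v (w1 ++ w2).
Proof.
move=> [sorted1 path1] [sorted2 path2] earlier; split.
  move: sorted1 sorted2; rewrite map_cat !(sorted_pairwise ltn_trans) pairwise_cat.
  move=> -> ->; rewrite !andbT; apply/allrelP => _ _ /mapP [p1 p1_w1 ->] /mapP [p2 p2_w2 ->].
  exact: earlier.
rewrite cat_path path1 /=; move: path2; rewrite /walk_end (last_map snd w1 (0, v)).
by case: (last _ w1) => t' x; case: (w2).
Qed.

Lemma temporal_walk_cat_within a b c v w1 w2 : a <= b.+1 -> b <= c ->
  temporal_walk G v w1 -> walk_within a b w1 ->
  temporal_walk G (walk_end v w1) w2 -> walk_within b.+1 c w2 ->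
  temporal_walk G v (w1 ++ w2) /\ walk_within a c (w1 ++ w2).
Proof.
move=> a_le b_le_c walk1 /allP within1 walk2 /allP within2; split.
  apply: temporal_walk_cat => // p1 p2 p1_w1 p2_w2.
  have /andP [_ p1_le] := within1 p1 p1_w1; have /andP [p2_gt _] := within2 p2 p2_w2.
  exact: leq_ltn_trans p1_le p2_gt.
rewrite /walk_within all_cat; apply/andP; split; apply/allP => p.
  by move=> /within1 /andP [-> /leq_trans ->].
by move=> /within2 /andP [/(leq_trans a_le) -> ->].
Qed.

End Walks.

Definition snapshots_at {n : nat} (G : nat -> rel 'I_n) (RT : seq nat) : nat -> rel 'I_n :=
  fun tau => G (nth 0 RT tau.-1).

Section AgentWalk.
Variables (n N : nat) (G : nat -> rel 'I_n) (tour : nat -> 'I_n) (RT : seq nat) (j : nat).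
Hypotheses (tour_cyclic : tour N.+1 = tour 1) (j_range : 1 <= j <= N).
Local Notation H := (snapshots_at G RT).
Local Notation state := (rstate N tour H j).

Fixpoint agent_walk (tau : nat) : seq (nat * 'I_n) :=
  if tau is tau'.+1 then
    agent_walk tau' ++
      (if H tau (tour (state tau')) (tour (state tau').+1)
       then [:: (nth 0 RT tau', tour (state tau').+1)] else [::])
  else [::].

Lemma tour_succ_state q : q <= N -> tour (q %% N + 1) = tour q.+1.
Proof. by move=> q_le; rewrite succ_stateE //; case: eqP => [->|]. Qed.

Lemma agent_walk_end tau : walk_end (tour j) (agent_walk tau) = tour (state tau).
Proof.
elim: tau => [|tau IH] //=; rewrite walk_end_cat IH; case: ifP => // _.
by have [/andP [_ s_le] _] := rstate_range tour H tau j_range; rewrite tour_succ_state.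
Qed.

Lemma agent_walk_times tau p : p \in agent_walk tau -> exists2 i, i < tau & p.1 = nth 0 RT i.
Proof.
elim: tau => [|tau IH] //=; rewrite mem_cat => /orP [/IH [i i_lt ->]|].
  by exists i => //; apply: leqW.
by case: ifP => // _; rewrite inE => /eqP ->; exists tau.
Qed.

Lemma agent_walk_temporal tau : sorted ltn RT -> tau <= size RT ->
  temporal_walk G (tour j) (agent_walk tau).
Proof.
move=> RT_sorted; elim: tau => [|tau IH] tau_le //=; case: ifP => edge; last first.
  by rewrite cats0; apply: IH; apply: ltnW.
apply: temporal_walk_cat; first exact: (IH (ltnW tau_le)).
  by split; rewrite //= agent_walk_end andbT.
move=> p1 p2 /agent_walk_times [i i_lt ->]; rewrite inE => /eqP -> /=.
by apply: (sorted_ltn_nth ltn_trans) => //; rewrite inE; apply: ltn_trans tau_le.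
Qed.

Lemma agent_walk_visits tau q : visited N tour H j tau q ->
  tour q \in walk_vertices (tour j) (agent_walk tau).
Proof.
elim: tau q => [|tau IH] q /=.
  by rewrite /visited /cint /= leqnn -eqn_leq => /eqP ->; rewrite mem_head.
rewrite /visited /=; case: ifP => edge; last by rewrite cats0; apply: IH.
have [s_range _] := rstate_range tour H tau j_range.
rewrite mem_walk_vertices_cat agent_walk_end.
case/(cint_succ_inv j_range s_range) => [/IH -> //|->].
by rewrite tour_succ_state ?(proj2 (andP s_range)) // !inE eqxx !orbT.
Qed.

End AgentWalk.

Lemma roundabout_epoch_walk n N (G : nat -> rel 'I_n) tour RT j t a c Delta (x : 'I_n) :
  tour N.+1 = tour 1 -> 1 <= j <= N -> 0 < Delta -> a + Delta <= c ->
  temporally_connected_on G a.+1 (a.+1 + Delta - 1) ->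
  sorted ltn RT -> {in RT, forall y, a + Delta < y <= c} -> t <= size RT ->
  exists e, temporal_walk G x e /\ walk_within a.+1 c e /\
    forall q, visited N tour (snapshots_at G RT) j t q -> tour q \in walk_vertices x e.
Proof.
move=> tour_cyclic j_range Delta_gt0 c_ge connected RT_sorted RT_range t_le.
have [h [h_walk [h_within h_end]]] := connected x (tour j).
have {}h_within : walk_within a.+1 (a + Delta) h.
  by rewrite (_ : a + Delta = a.+1 + Delta - 1) //; lia.
set e := agent_walk N G tour RT j t.
have e_walk : temporal_walk G (walk_end x h) e.
  by rewrite /walk_end h_end; apply: agent_walk_temporal.
have e_within : walk_within (a + Delta).+1 c e.
  apply/allP => p /agent_walk_times [i i_lt ->]; apply: RT_range.
  exact/mem_nth/(leq_trans i_lt).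
have a_le : a.+1 <= (a + Delta).+1 by rewrite ltnS leq_addr.
have [he_walk he_within] := temporal_walk_cat_within a_le c_ge
  h_walk h_within e_walk e_within.
exists (h ++ e); split=> //; split=> // q visited_q.
by rewrite mem_walk_vertices_cat /walk_end h_end agent_walk_visits ?orbT.
Qed.

Lemma epoch_walks_cat n (G : nat -> rel 'I_n) (b : nat -> nat) rho
    (P : nat -> 'I_n -> Prop) (v : 'I_n) :
  (forall i, 1 <= i <= rho -> b i.-1 <= b i) ->
  (forall i, 1 <= i <= rho -> forall x, exists e, temporal_walk G x e /\
     walk_within (b i.-1).+1 (b i) e /\ forall u, P i u -> u \in walk_vertices x e) ->
  exists w, temporal_walk G v w /\ walk_within (b 0).+1 (b rho) w /\
    forall i u, 1 <= i <= rho -> P i u -> u \in walk_vertices v w.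
Proof.
move=> b_mono epoch_walk.
suff /(_ rho (leqnn _)) [_ //] : forall m, m <= rho -> b 0 <= b m /\
  exists w, temporal_walk G v w /\ walk_within (b 0).+1 (b m) w /\
    forall i u, 1 <= i <= m -> P i u -> u \in walk_vertices v w.
elim=> [|m IH] m_lt; first by split=> //; exists [::]; do 2 split => //; move=> i u; lia.
have [b0_le [w [w_walk [w_within w_visits]]]] := IH (ltnW m_lt).
have m1_range : 1 <= m.+1 <= rho by rewrite ltn0Sn.
have [e [e_walk [e_within e_visits]]] := epoch_walk _ m1_range (walk_end v w).
have bm_le := b_mono _ m1_range.
have [we_walk we_within] := temporal_walk_cat_within (b0_le : (b 0).+1 <= (b m).+1) bm_le
  w_walk w_within e_walk e_within.
split; first exact: leq_trans bm_le.
exists (w ++ e); split=> //; split=> // i u i_range P_iu.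
rewrite mem_walk_vertices_cat; have [i_le|i_eq] : i <= m \/ i = m.+1 by lia.
  by rewrite (w_visits i) //; lia.
by rewrite e_visits ?orbT // -i_eq.
Qed.

Lemma tree_neighbor n (T : rel 'I_n) (u : 'I_n) : 1 < n -> is_tree T -> exists x, T u x.
Proof.
move=> n_gt1 [_ [_ [connected _]]].
have /card_gt0P [w /= w_neq_u] : 0 < #|predC1 u| by rewrite cardC1 card_ord; lia.
have /connectP [[|x p] /=] := connected u w.
  by move=> _ w_u; move: w_neq_u; rewrite w_u inE eqxx.
by case/andP=> Tux _ _; exists x.
Qed.

Lemma dfs_tour_traverses n (T : rel 'I_n) tour r u x :
  (forall u v, T u v = T v u) -> dfs_tour T tour r -> T u x -> u != x ->
  exists2 q, 1 <= q <= Ntour n &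
    ((tour q == u) && (tour q.+1 == x)) || ((tour q == x) && (tour q.+1 == u)).
Proof.
move=> T_sym [_ [_ [_ traversals]]].
wlog u_lt_x : u x / u < x => [wlog_lt Tux u_neq_x|Tux _].
  case: (ltngtP u x) => [/wlog_lt|/wlog_lt|/val_inj u_x]; last by rewrite u_x eqxx in u_neq_x.
    by apply.
  by rewrite T_sym eq_sym => /(_ Tux u_neq_x) [q q_range trav]; exists q; rewrite // orbC.
have := traversals u x u_lt_x Tux.
move=> /(congr1 (leq 1)); rewrite -has_count => /hasP [q].
by rewrite mem_iota => q_range; exists q => //; lia.
Qed.

Lemma dfs_tour_surj n (T : rel 'I_n) tour r : 1 < n -> is_tree T -> dfs_tour T tour r ->
  forall u : 'I_n, exists2 q, 1 <= q <= Ntour n & tour q = u.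
Proof.
move=> n_gt1 tree tour_dfs u; have [x Tux] := tree_neighbor u n_gt1 tree.
have u_neq_x : u != x by apply: contraTneq Tux => ->; case: tree => [_ [/(_ x) ->]].
have [T_sym _] := tree.
have [q q_range /orP [/andP [/eqP <- _]|/andP [_ /eqP <-]]] :=
  dfs_tour_traverses T_sym tour_dfs Tux u_neq_x; first by exists q.
have [q_lt|->] : q < Ntour n \/ q = Ntour n by lia.
  by exists q.+1 => //; lia.
by case: tour_dfs => [tour1 [tourN _]]; exists 1; rewrite ?tour1 ?tourN //; rewrite /Ntour; lia.
Qed.

Lemma interval_I_cover N ms q : sorted ltn ms -> 1 < size ms -> 1 <= q <= N ->
  exists2 j, j < size ms & interval_I N ms j q.
Proof.
move=> ms_sorted size_gt1 q_range; set d := size ms.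
have ms_lt i i' : i < i' < d -> nth 0 ms i < nth 0 ms i'.
  by case/andP=> i_lt i'_lt; apply: (sorted_ltn_nth ltn_trans) => //; rewrite inE (ltn_trans i_lt).
have last_gt_first := ms_lt 0 d.-1 ltac:(lia).
have wrap : q < nth 0 ms 0 \/ nth 0 ms d.-1 <= q -> interval_I N ms d.-1 q.
  rewrite /interval_I prednK ?modnn; last exact: ltnW.
  by rewrite /cint_open /cint; case: ifP; lia.
set c := find (fun x => q < x) ms.
have before i : i < c -> nth 0 ms i <= q by move/(before_find 0)/negbT; rewrite -leqNgt.
have after : c < d -> q < nth 0 ms c by move=> c_lt; apply: nth_find; rewrite has_find.
have [c0|c_gt0] := posnP c.
  have c_lt : c < d by rewrite c0; apply: ltnW.
  by exists d.-1; [lia | apply: wrap; left; move: (after c_lt); rewrite c0].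
have [c_lt|c_ge] := ltnP c d; last first.
  by exists d.-1; [lia | apply: wrap; right; apply: before; lia].
exists c.-1; first lia.
rewrite /interval_I prednK // modn_small // /cint_open /cint.
have := ms_lt c.-1 c ltac:(lia); have := before c.-1 ltac:(lia); have := after c_lt.
by case: ifP; lia.
Qed.

Lemma covering_tuple_visits_all N rho tt (act : nat -> nat -> nat -> bool)
    (V : nat -> nat -> nat -> bool) s : 0 < rho ->
  (forall i, 1 <= i <= rho -> act i tt (s i)) ->
  (forall i j, 1 <= i <= rho -> act i tt j -> 1 <= j <= N) ->
  (forall q, 1 <= q <= N -> exists2 j, act 1 tt j & V 1 j q) ->
  (let ms := union_starts N rho tt act in forall j, j < size ms ->
     exists i, 1 <= i <= rho /\ forall q, interval_I N ms j q -> V i (s i) q) ->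
  forall q, 1 <= q <= N -> exists2 i, 1 <= i <= rho & V i (s i) q.
Proof.
move=> rho_gt0 s_active active_range first_cover covering q q_range.
set ms := union_starts N rho tt act in covering.
have in_ms i j : 1 <= i <= rho -> act i tt j -> j \in ms.
  move=> i_range act_j; rewrite mem_filter mem_iota (active_range i) // andbT.
  by apply/hasP; exists i; rewrite // mem_iota; lia.
have first_epoch : 1 <= 1 <= rho by rewrite leqnn.
(* With a single start [m] the only interval [[m, m[[ is empty, but then the
   agent [s 1 = m] is the only active one of epoch 1 and visits every state. *)
have [size_le1|size_gt1] := leqP (size ms) 1.
  have [j act_j V_j] := first_cover q q_range; exists 1 => //.
  suff <- : j = s 1 by [].
  move: (in_ms _ _ first_epoch act_j) (in_ms _ _ first_epoch (s_active 1 first_epoch)).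
  by move: size_le1; case: (ms) => [|m [|]] //= _; rewrite !inE => /eqP -> /eqP ->.
have ms_sorted : sorted ltn ms.
  exact: (sorted_filter ltn_trans _ (iota_ltn_sorted 1 N)).
have [j j_lt I_q] := interval_I_cover ms_sorted size_gt1 q_range.
by have [i [i_range covers]] := covering j j_lt; exists i; last exact: covers.
Qed.

Lemma epoch_roundabout_walk n (G : nat -> rel 'I_n) L T k Delta b tour N t i j (x : 'I_n) :
  tour N.+1 = tour 1 -> 1 <= j <= N -> 0 < Delta -> b i <= L ->
  Delta + t <= count (deficient G T k) (iota (b i.-1).+1 (b i - b i.-1)) ->
  delta_temporally_connected G L Delta ->
  exists e, temporal_walk G x e /\ walk_within (b i.-1).+1 (b i) e /\
    forall q, visited N tour (epochH G T k Delta b i) j t q -> tour q \in walk_vertices x e.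
Proof.
move=> tour_cyclic j_range Delta_gt0 bi_le deficient_count connected.
set a := b i.-1 in deficient_count *; set RT := roundabout_times G T k Delta b i.
have epoch_size := count_size (deficient G T k) (iota a.+1 (b i - a)).
rewrite size_iota in epoch_size.
have RT_size : t <= size RT.
  have -> : size RT = count (deficient G T k) (iota (a.+1 + Delta) (b i - (a + Delta))).
    by rewrite size_filter addSn.
  have split_epoch : b i - a = Delta + (b i - (a + Delta)) by lia.
  move: deficient_count; rewrite split_epoch iotaD count_cat.
  by have := count_size (deficient G T k) (iota a.+1 Delta); rewrite size_iota; lia.
apply: (roundabout_epoch_walk (RT := RT) (Delta := Delta)) => //; first lia.
- by apply: connected; lia.
- exact: (sorted_filter ltn_trans _ (iota_ltn_sorted _ _)).
- by move=> y; rewrite mem_filter mem_iota => /andP [_]; lia.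
Qed.

Lemma nondecreasing_le_last (b : nat -> nat) rho i :
  (forall i, 1 <= i <= rho -> b i.-1 <= b i) -> i <= rho -> b i <= b rho.
Proof.
move=> b_mono i_le.
apply: (homo_leq_in (D := [pred i | i <= rho]) (f := b) leqnn leq_trans) => //.
- by move=> ? j _ j_le k /andP [_ /ltnW k_le]; apply: leq_trans k_le j_le.
- by move=> i' _ i'_lt; apply: (b_mono i'.+1).
- exact: leqnn.
Qed.

Theorem lemma13
  (n : nat) (G : nat -> rel 'I_n) (L k Delta rho : nat)
  (T : rel 'I_n) (tour : nat -> 'I_n) (r : 'I_n)
  (b : nat -> nat) (act : nat -> nat -> nat -> bool) (s : nat -> nat) :
  2 <= n -> 1 <= k -> 1 <= Delta ->
  simple_snapshots G L ->
  spanning_tree_of_underlying G L T ->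
  dfs_tour T tour r ->
  is_rho k rho ->
  (* epochs: [b(i-1)+1, b i], i = 1..rho, an initial part of [L] *)
  b 0 = 0 ->
  (forall i, 1 <= i <= rho -> b i.-1 <= b i) ->
  b rho <= L ->
  (forall i, 1 <= i <= rho ->
     Delta + tsteps n k <= count (deficient G T k) (iota (b i.-1).+1 (b i - b i.-1))) ->
  (* act i = the active sets A(0),...,A(t) of a run of the roundabout process of epoch i *)
  (forall i, 1 <= i <= rho ->
     active_run (Ntour n) tour (epochH G T k Delta b i) (tsteps n k) (act i)) ->
  delta_temporally_connected G L Delta ->
  (* (s_1,...,s_rho) in S^(1) x ... x S^(rho) *)
  (forall i, 1 <= i <= rho -> act i (tsteps n k) (s i)) ->
  (* the tuple is I-covering for every I in the family of intervals *)
  (let ms := union_starts (Ntour n) rho (tsteps n k) act in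
   forall j, j < size ms ->
     exists i, 1 <= i <= rho /\
       forall q, interval_I (Ntour n) ms j q ->
         visited (Ntour n) tour (epochH G T k Delta b i) (s i) (tsteps n k) q) ->
  forall v : 'I_n, exists w : seq (nat * 'I_n),
    temporal_walk G v w /\ walk_within 1 (b rho) w /\
    forall u : 'I_n, u \in v :: [seq p.2 | p <- w].
Proof.
move=> n_ge2 k_ge1 Delta_ge1 _ [tree _] tour_dfs rho_def b0 b_mono b_rho_le deficient_count
  run connected s_active covering v.
set N := Ntour n in run s_active covering *.
set t := tsteps n k in deficient_count run s_active covering *.
set V := fun i j q => visited N tour (epochH G T k Delta b i) j t q.
have t_lt_N : t < N by apply: ltn_Pdiv; rewrite /N /Ntour; lia.
have rho_gt0 := is_rho_gt0 k_ge1 rho_def.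
have tour_cyclic : tour N.+1 = tour 1 by case: tour_dfs => [-> [-> _]].
have active_range i j : 1 <= i <= rho -> act i t j -> 1 <= j <= N.
  by move=> i_range; apply: (active_run_range (run i i_range)).
pose P i u := exists2 q, V i (s i) q & tour q = u.
have epoch_walk i : 1 <= i <= rho -> forall x, exists e, temporal_walk G x e /\
    walk_within (b i.-1).+1 (b i) e /\ forall u, P i u -> u \in walk_vertices x e.
  move=> i_range x; have bi_le : b i <= L.
    by apply: leq_trans b_rho_le; apply: nondecreasing_le_last; case/andP: i_range.
  have [e [e_walk [e_within e_visits]]] := epoch_roundabout_walk x tour_cyclic
    (active_range i _ i_range (s_active i i_range)) Delta_ge1 bi_le
    (deficient_count i i_range) connected.
  by exists e; do 2 split=> //; move=> u [q V_q <-]; apply: e_visits.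
have [w [w_walk [w_within w_visits]]] := epoch_walks_cat (P := P) v b_mono epoch_walk.
exists w; rewrite b0 in w_within; split=> //; split=> // u.
have [q q_range <-] := dfs_tour_surj n_ge2 tree tour_dfs u.
have first_run := run 1 ltac:(lia).
have [i i_range V_q] := covering_tuple_visits_all (V := V) rho_gt0 s_active active_range
  (fun q q_range => active_run_cover first_run t_lt_N (leqnn t) q_range) covering q_range.
by apply: (w_visits i) => //; exists q.
Qed.
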